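(* Assume $f$ is twice continuously differentiable on $(0,\infty)$. Define $S$ on probability vectors $q$ on $\hat{\mathcal X}$ implicitly by $$S[q](i)=q(i)\sum_x\frac{p(x)A_q(x,i)}{\sum_kq(k)A_q(x,k)},\qquad A_q(x,i)=\exp\{-s_1d(x,i)-s_2g(p,S[q],i)\},$$ with $g(p,r,i)=f\big(\tfrac{p(i)}{r(i)}\big)-\tfrac{p(i)}{r(i)}f'\big(\tfrac{p(i)}{r(i)}\big)$. Let $q^*$ be a fixed point of $S$ achieving the RDPF, and let $A=A_{q^*}$. Let $J(q^* )$ be the Jacobian matrix of $S$ at $q^*$, with entries $J_{ij}=\partial S[q](i)/\partial q(j)$. Then $$J(q^* )=(I-M)(I-\Gamma J(q^* )),$$ where $$M_{ij}=q^*(i)\sum_xp(x)\frac{A(x,i)A(x,j)}{\big(\sum_kq^*(k)A(x,k)\big)^2},\qquad \Gamma=s_2\,\mathrm{diag}\Big[q^*(i)\frac{\partial^2}{\partial q(i)^2}D_f(p\|q)\Big|_{q=q^*}\Big]_i.$$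
   Context: Finite alphabets $\mathcal X=\hat{\mathcal X}$. The source distribution is $p$, $d\ge0$ is a distortion, and $s_1,s_2\ge0$ are multipliers. $f:(0,\infty)\to\mathbb R$ is convex with $f(1)=0$, and $D_f(p\|q)=\sum_xq(x)f(p(x)/q(x))$. $S$ is the update map of the exact alternating minimization iteration $q^{(n+1)}=S[q^{(n)}]$ for the rate-distortion-perception problem $\min_QI(p,Q)$ subject to $\mathbb E[d]\le D$ and $D_f(p\|q_Q)\le P$. *)

(* R : realType, alphabet X = Xhat = 'I_n. *)
From HB Require Import structures.
From mathcomp Require Import all_boot all_order all_algebra.
From mathcomp Require Import all_classical all_reals all_analysis.
Set Implicit Arguments. Unset Strict Implicit. Unset Printing Implicit Defensive.
Import Order.TTheory GRing.Theory Num.Theory.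
Local Open Scope ring_scope.

Section Defs.
Variables (R : realType) (n : nat).
Implicit Types (p q r : 'I_n -> R).

Definition Df (f : R -> R) p q : R := \sum_(x < n) q x * f (p x / q x).

Definition gfun (f : R -> R) p r (i : 'I_n) : R :=
  f (p i / r i) - p i / r i * (derive1 f) (p i / r i).

(* A(x,i) = exp(-s1 d(x,i) - s2 g(p,r,i)), where r = S[q] *)
Definition Afun (s1 s2 : R) (d : 'I_n -> 'I_n -> R) (f : R -> R) p r
  (x i : 'I_n) : R := expR (- s1 * d x i - s2 * gfun f p r i).

Definition upd q (j : 'I_n) (t : R) : 'I_n -> R :=
  fun k => if k == j then t else q k.

Definition pderivable (F : ('I_n -> R) -> R) q (j : 'I_n) : Prop :=
  derivable (fun t => F (upd q j t)) (q j) 1.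
Definition pderiv (F : ('I_n -> R) -> R) q (j : 'I_n) : R :=
  derive1 (fun t => F (upd q j t)) (q j).
Definition pderiv2 (F : ('I_n -> R) -> R) q (i : 'I_n) : R :=
  derive1 (derive1 (fun t => F (upd q i t))) (q i).

Definition jacobianS (S : ('I_n -> R) -> ('I_n -> R)) q : 'M[R]_n :=
  \matrix_(i, j) pderiv (fun r => S r i) q j.

Definition Mmat (A : 'I_n -> 'I_n -> R) p q : 'M[R]_n :=
  \matrix_(i, j) (q i * \sum_(x < n) p x * (A x i * A x j)
                        / (\sum_(k < n) q k * A x k) ^+ 2).

Definition Gammat (s2 : R) (f : R -> R) p q : 'M[R]_n :=
  s2 *: diag_mx (\row_i (q i * pderiv2 (Df f p) q i)).

End Defs.

From HB Require Import structures.
From mathcomp Require Import all_boot all_order all_algebra.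
From mathcomp Require Import all_classical all_reals all_analysis.
From mathcomp Require Import ring.
Import Order.TTheory GRing.Theory Num.Theory.
Import numFieldNormedType.Exports.
Local Open Scope classical_set_scope.
Local Open Scope ring_scope.
Set Implicit Arguments.
Unset Strict Implicit.

(* Differentiate the implicit update equation defining S along the coordinate
   curve t |-> q* with its j-th entry replaced by t.  The key
   observation is that g(p, r, i) = f(u) - u f'(u), u = p(i)/r(i), is the
   partial derivative of D_f(p||r) in r(i), so moving r moves the exponent of
   A(x, i) by -s2 (d^2 D_f / dr(i)^2) dr(i).  Hence, with w = e_j - Gamma J e_j,
   the normalizer sum_k q(k) A(x, k) moves by sum_k A(x, k) w(k), and at the
   fixed point, where sum_x p(x) A(x, i) / sum_k q*(k) A(x, k) = 1, the quotient
   rule collapses to J e_j = w - M w. *)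

Lemma is_derive_cst_div (R : realType) (a : R) (rho : R -> R) (t drho : R) :
  rho t != 0 -> is_derive t 1 rho drho ->
  is_derive t 1 (fun s => a / rho s) (- a * drho / rho t ^+ 2).
Proof.
move=> rho_neq0 drho_t.
apply: is_derive_eq (is_deriveM (is_derive_cst a t 1) (is_deriveV rho_neq0 drho_t)) _.
by rewrite /GRing.scale /=; field.
Qed.

Lemma is_derive_sumr (R : realType) (n : nat) (h : 'I_n -> R -> R) (t : R)
    (dh : 'I_n -> R) :
  (forall k, is_derive t 1 (h k) (dh k)) ->
  is_derive t 1 (fun s => \sum_(k < n) h k s) (\sum_(k < n) dh k).
Proof.
move=> dh_t; rewrite (_ : (fun s => _) = \sum_(k < n) h k); first exact: is_derive_sum.
by apply/funext => s; rewrite fct_sumE.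
Qed.

Lemma upd_id (R : realType) (n : nat) (q : 'I_n -> R) j : upd q j (q j) = q.
Proof. by apply/funext => k; rewrite /upd; case: eqP => [->|]. Qed.

Lemma is_derive_upd (R : realType) (n : nat) (q : 'I_n -> R) j (t : R) k :
  is_derive t 1 (fun s => upd q j s k) (k == j)%:R.
Proof.
rewrite /upd; case: eqP => _; [exact: is_derive_id | exact: is_derive_cst].
Qed.

Lemma near_upd (R : realType) (n : nat) (q : 'I_n -> R) j (e : R) : 0 < e ->
  \forall t \near q j, forall k, `|upd q j t k - q k| < e.
Proof.
move=> e_gt0; apply/nbhs_ballP; exists e => // t qt_near k.
by rewrite /upd; case: eqP => [->|_]; [rewrite distrC | rewrite subrr normr0].
Qed.

Lemma Gammat_mulmxE (R : realType) (n : nat) (s2 : R) (f : R -> R)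
    (p q : 'I_n -> R) (B : 'M[R]_n) i j :
  (Gammat s2 f p q *m B) i j = s2 * (q i * pderiv2 (Df f p) q i) * B i j.
Proof. by rewrite /Gammat -scalemxAl mul_diag_mx !mxE mulrA. Qed.

Section TangentIntercept.
Variables (R : realType) (n : nat) (f : R -> R).
Hypothesis f_derivable : forall u : R, 0 < u -> derivable f u 1.
Hypothesis f'_derivable : forall u : R, 0 < u -> derivable (derive1 f) u 1.

Definition tangent_intercept (u : R) : R := f u - u * derive1 f u.

Lemma is_derive_tangent_intercept (u : R) : 0 < u ->
  is_derive u 1 tangent_intercept (- (u * derive1 (derive1 f) u)).
Proof.
move=> u_gt0; rewrite !derive1E.
have df := derivableP (f_derivable u_gt0).
have df' := derivableP (f'_derivable u_gt0).
apply: is_derive_eq (is_deriveB df (is_deriveM (is_derive_id u 1) df')) _.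
by rewrite -!derive1E /GRing.scale /=; ring.
Qed.

Lemma is_derive_tangent_intercept_div (a : R) (rho : R -> R) (t drho : R) :
  0 < a -> 0 < rho t -> is_derive t 1 rho drho ->
  is_derive t 1 (fun s => tangent_intercept (a / rho s))
    (a ^+ 2 / rho t ^+ 3 * derive1 (derive1 f) (a / rho t) * drho).
Proof.
move=> a_gt0 rho_gt0 drho_t.
have d_ratio := is_derive_cst_div a (lt0r_neq0 rho_gt0) drho_t.
have d_ti := is_derive_tangent_intercept (divr_gt0 a_gt0 rho_gt0).
apply: is_derive_eq (is_derive1_comp (x := t) d_ti d_ratio) _.
by rewrite /=; field; rewrite lt0r_neq0.
Qed.

Lemma Df_upd (p q : 'I_n -> R) i (s : R) :
  Df f p (upd q i s) = \sum_(x < n | x != i) q x * f (p x / q x) + s * f (p i / s).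
Proof.
rewrite /Df (bigD1 i) //= addrC /upd eqxx; congr (_ + _).
by apply: eq_bigr => x /negbTE ->.
Qed.

Lemma is_derive_Df_upd (p q : 'I_n -> R) i (t : R) : 0 < p i -> 0 < t ->
  is_derive t 1 (fun s => Df f p (upd q i s)) (tangent_intercept (p i / t)).
Proof.
move=> p_gt0 t_gt0; rewrite (funext (Df_upd p q i)).
have d_ratio := is_derive_cst_div (p i) (lt0r_neq0 t_gt0) (is_derive_id t 1).
have d_f := is_derive1_comp (x := t)
  (derivableP (f_derivable (divr_gt0 p_gt0 t_gt0))) d_ratio.
apply: is_derive_eq
  (is_deriveD (is_derive_cst _ t 1) (is_deriveM (is_derive_id t 1) d_f)) _.
rewrite /tangent_intercept derive1E /GRing.scale /=; field; exact: lt0r_neq0.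
Qed.

Lemma pderiv2_Df (p q : 'I_n -> R) i : 0 < p i -> 0 < q i ->
  pderiv2 (Df f p) q i = p i ^+ 2 / q i ^+ 3 * derive1 (derive1 f) (p i / q i).
Proof.
move=> p_gt0 q_gt0; rewrite /pderiv2.
have pderiv_near : \forall t \near q i,
    derive1 (fun s => Df f p (upd q i s)) t = tangent_intercept (p i / t).
  near=> t; rewrite derive1E; apply: derive_val; apply: is_derive_Df_upd => //.
  by near: t; exact: lt_nbhsr.
rewrite derive1E (near_eq_derive _ pderiv_near).
have := is_derive_tangent_intercept_div p_gt0 q_gt0 (is_derive_id (q i) 1).
by rewrite mulr1 => d_ti; apply: derive_val.
Unshelve. all: by end_near.
Qed.

Lemma is_derive_gfun (p : 'I_n -> R) (r : R -> 'I_n -> R) (t dr : R) k :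
  0 < p k -> 0 < r t k -> is_derive t 1 (fun s => r s k) dr ->
  is_derive t 1 (fun s => gfun f p (r s) k) (pderiv2 (Df f p) (r t) k * dr).
Proof.
move=> p_gt0 r_gt0 dr_t; rewrite pderiv2_Df //.
exact: is_derive_tangent_intercept_div.
Qed.

End TangentIntercept.

Lemma sum_Mmat_mul (R : realType) (n : nat) (a : 'I_n -> 'I_n -> R)
    (p q w : 'I_n -> R) (i : 'I_n) :
  \sum_(k < n) Mmat a p q i k * w k =
  q i * \sum_(x < n) p x * a x i / (\sum_(k < n) q k * a x k) ^+ 2
          * \sum_(k < n) a x k * w k.
Proof.
under eq_bigr => k _ do rewrite mxE -mulrA mulr_suml.
rewrite -mulr_sumr exchange_big /=; congr (_ * _).
by apply: eq_bigr => x _; rewrite mulr_sumr; apply: eq_bigr => k _; ring.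
Qed.

Section AlternatingMinimization.
Variables (R : realType) (n : nat) (p : 'I_n -> R) (d : 'I_n -> 'I_n -> R)
  (s1 s2 : R) (f : R -> R).
Hypothesis p_gt0 : forall x, 0 < p x.
Hypothesis f_derivable : forall u : R, 0 < u -> derivable f u 1.
Hypothesis f'_derivable : forall u : R, 0 < u -> derivable (derive1 f) u 1.

Local Notation A := (Afun s1 s2 d f p).

Definition am_normalizer (q r : 'I_n -> R) (x : 'I_n) : R :=
  \sum_(k < n) q k * A r x k.

Definition am_update (q r : 'I_n -> R) (i : 'I_n) : R :=
  q i * \sum_(x < n) p x * A r x i / am_normalizer q r x.

Lemma am_normalizer_gt0 q r x : (forall k, 0 < q k) -> 0 < am_normalizer q r x.
Proof.
move=> q_gt0; rewrite /am_normalizer (bigD1 x) //=.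
apply: ltr_pwDl; first by rewrite mulr_gt0 // expR_gt0.
by apply: sumr_ge0 => k _; rewrite mulr_ge0 ?ltW // expR_gt0.
Qed.

Lemma sum_am_weights_fixed q i : 0 < q i -> am_update q q i = q i ->
  \sum_(x < n) p x * A q x i / am_normalizer q q x = 1.
Proof. by move=> q_gt0 fixed; apply: (mulfI (lt0r_neq0 q_gt0)); rewrite mulr1. Qed.

Section Curve.
Variables (q r : R -> 'I_n -> R) (t : R) (dq dr : 'I_n -> R).
Hypothesis dq_t : forall k, is_derive t 1 (fun s => q s k) (dq k).
Hypothesis dr_t : forall k, is_derive t 1 (fun s => r s k) (dr k).
Hypothesis r_gt0 : forall k, 0 < r t k.

(* At a fixed point [w] is the column [(I - Gamma J) e_j] when [q] moves along [e_j]. *)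
Let w k := dq k - s2 * (q t k * pderiv2 (Df f p) (r t) k) * dr k.

Lemma is_derive_Afun x k : is_derive t 1 (fun s => A (r s) x k)
  (- (s2 * pderiv2 (Df f p) (r t) k * dr k) * A (r t) x k).
Proof.
have d_g := is_derive_gfun f_derivable f'_derivable (p_gt0 k) (r_gt0 k) (dr_t k).
have d_exponent := is_deriveB (is_derive_cst (- s1 * d x k) t 1)
  (is_deriveM (is_derive_cst s2 t 1) d_g).
apply: is_derive_eq (is_derive1_comp (is_derive_expR _) d_exponent) _.
by rewrite /GRing.scale /= /Afun; ring.
Qed.

Lemma is_derive_am_normalizer x : is_derive t 1
  (fun s => am_normalizer (q s) (r s) x) (\sum_(k < n) A (r t) x k * w k).
Proof.
apply: is_derive_eq
  (is_derive_sumr (fun k => is_deriveM (dq_t k) (is_derive_Afun x k))) _.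
by apply: eq_bigr => k _; rewrite /GRing.scale /= /w; ring.
Qed.

Lemma is_derive_am_update_fixed i : q t = r t -> am_update (r t) (r t) i = r t i ->
  is_derive t 1 (fun s => am_update (q s) (r s) i)
    (w i - \sum_(k < n) Mmat (A (r t)) p (r t) i k * w k).
Proof.
move=> qr fixed; rewrite sum_Mmat_mul.
set Z := am_normalizer (q t) (r t).
have Z_gt0 x : 0 < Z x by rewrite /Z qr; exact: am_normalizer_gt0.
have d_weight x : is_derive t 1
    (fun s => p x * A (r s) x i / am_normalizer (q s) (r s) x)
    (p x * A (r t) x i / Z x * (- (s2 * pderiv2 (Df f p) (r t) i * dr i)
       - (\sum_(k < n) A (r t) x k * w k) / Z x)).
  have := is_deriveM (is_deriveM (is_derive_cst (p x) t 1) (is_derive_Afun x i))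
    (is_deriveV (lt0r_neq0 (Z_gt0 x)) (is_derive_am_normalizer x)).
  move=> d_prod; apply: is_derive_eq d_prod _; rewrite /GRing.scale /= !fctE.
  by rewrite -/Z; field; rewrite lt0r_neq0.
apply: is_derive_eq (is_deriveM (dq_t i) (is_derive_sumr d_weight)) _.
have weights1 := sum_am_weights_fixed (r_gt0 i) fixed.
rewrite /GRing.scale /= /Z qr weights1 mul1r.
under eq_bigr => x _ do rewrite mulrBr.
rewrite sumrB -mulr_suml weights1 mul1r.
under [in RHS]eq_bigr => x _ do rewrite -/(am_normalizer (r t) (r t) x).
set N := am_normalizer (r t) (r t).
set dN := fun x => \sum_(k < n) A (r t) x k * w k.
have -> : \sum_(x < n) p x * A (r t) x i / N x * (dN x / N x)
        = \sum_(x < n) p x * A (r t) x i / N x ^+ 2 * dN x.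
  by apply: eq_bigr => x _; field; exact/lt0r_neq0/am_normalizer_gt0.
rewrite [w i]/w qr; ring.
Qed.

End Curve.
End AlternatingMinimization.

Theorem theorem5 (R : realType) (n : nat)
  (p : 'I_n -> R) (d : 'I_n -> 'I_n -> R) (s1 s2 : R) (f : R -> R)
  (S : ('I_n -> R) -> ('I_n -> R)) (qs : 'I_n -> R) :
  (* source distribution, with full support *)
  (forall x, 0 < p x) -> \sum_(x < n) p x = 1 ->
  (forall x y, 0 <= d x y) -> 0 <= s1 -> 0 <= s2 ->
  (* f convex on (0,oo), f(1) = 0, f twice continuously differentiable *)
  (forall a b t : R, 0 < a -> 0 < b -> 0 <= t <= 1 ->
     f (t * a + (1 - t) * b) <= t * f a + (1 - t) * f b) ->
  f 1 = 0 ->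
  (forall t : R, 0 < t -> derivable f t 1) ->
  (forall t : R, 0 < t -> derivable (derive1 f) t 1) ->
  (forall t : R, 0 < t -> (derive1 (derive1 f) x @[x --> t] --> derive1 (derive1 f) t)) ->
  (* q* is a probability vector with full support *)
  (forall i, 0 < qs i) -> \sum_(i < n) qs i = 1 ->
  (* S is (implicitly) defined by the update equation near q* *)
  (exists2 e : R, 0 < e & forall q : 'I_n -> R,
     (forall k, `|q k - qs k| < e) ->
     (forall i, 0 < S q i) /\
     (forall i, S q i = q i * \sum_(x < n)
         p x * Afun s1 s2 d f p (S q) x i
           / \sum_(k < n) q k * Afun s1 s2 d f p (S q) x k)) ->
  (* q* is a fixed point of S *)
  S qs = qs ->
  (* the Jacobian of S at q* exists *)
  (forall i j, pderivable (fun r => S r i) qs j) ->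
  jacobianS S qs =
    (1%:M - Mmat (Afun s1 s2 d f p (S qs)) p qs)
      *m (1%:M - Gammat s2 f p qs *m jacobianS S qs).
Proof.
move=> p_gt0 _ _ _ _ _ _ df1 df2 _ qs_gt0 _ [e e_gt0 S_near] S_qs S_derivable.
rewrite S_qs mulmxBl mul1mx; apply/matrixP => i j.
have dS k : is_derive (qs j) 1 (fun t => S (upd qs j t) k) (jacobianS S qs k j).
  by rewrite mxE /pderiv derive1E; exact: derivableP (S_derivable k j).
have S_upd_near : \forall t \near qs j,
    S (upd qs j t) i = am_update p d s1 s2 f (upd qs j t) (S (upd qs j t)) i.
  by apply: filterS (near_upd qs j e_gt0) => t /S_near [_ ->].
have qs_fixed : am_update p d s1 s2 f qs qs i = qs i.
  have qs_ball k : `|qs k - qs k| < e by rewrite subrr normr0.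
  have [_ /(_ i)] := S_near qs qs_ball.
  by rewrite S_qs => /esym.
have := @is_derive_am_update_fixed _ _ p d s1 s2 f p_gt0 df1 df2 _ _ _ _ _
  (is_derive_upd qs j (qs j)) dS.
rewrite upd_id S_qs => /(_ qs_gt0 i erefl qs_fixed) dF.
rewrite {1}mxE /pderiv derive1E (near_eq_derive _ S_upd_near) derive_val.
have W_E k : (1%:M - Gammat s2 f p qs *m jacobianS S qs) k j
    = (k == j)%:R - s2 * (qs k * pderiv2 (Df f p) qs k) * jacobianS S qs k j.
  by rewrite mxE [X in _ + X]mxE Gammat_mulmxE mxE.
rewrite [RHS]mxE [X in _ = _ + X]mxE [X in _ = _ - X]mxE W_E.
by under [in RHS]eq_bigr => k _ do rewrite W_E.
Qed.
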